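(* Let $e\geqslant 1$ be an integer and $b\geqslant 2$ an even integer. Suppose that for every integer $a$ there exists an $(e,b)$-happy number $h$ with $h\equiv a\pmod{(b-1)^e}$. Then for every positive integer $x$ and every $N$, there exists an $(e,b)$-happy number $l>N$ such that $l+x$ is also $(e,b)$-happy.
   Context: For a positive integer $n=\sum_{j=0}^k a_j b^j$ with $0\leqslant a_j<b$, $T_{e,b}(n)=\sum_{j=0}^k a_j^e$; $T_{e,b}^r$ is the $r$-th iterate, $T_{e,b}^0(n)=n$. A positive integer $n$ is $(e,b)$-happy if $T_{e,b}^r(n)=1$ for some $r\geqslant 0$. *)

From mathcomp Require Import all_boot all_order all_algebra.
Set Implicit Arguments. Unset Strict Implicit. Unset Printing Implicit Defensive.

(* The fuel argument [k] only needs
   to exceed the number of digits of n; we use fuel n.+1, which suffices for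
   b >= 2 (for b < 2 the function is a junk value, never used). *)
Fixpoint digit_pow_sum_fuel (k e b n : nat) : nat :=
  match k with
  | 0 => 0
  | k'.+1 => if n == 0 then 0
             else (n %% b) ^ e + digit_pow_sum_fuel k' e b (n %/ b)
  end.

Definition T (e b n : nat) : nat := digit_pow_sum_fuel n.+1 e b n.

Definition happy (e b n : nat) : Prop :=
  0 < n /\ exists r : nat, iter r (T e b) n = 1.

From mathcomp Require Import all_boot all_order all_algebra.
From mathcomp Require Import cyclic.
From mathcomp Require Import zify.
Set Implicit Arguments. Unset Strict Implicit. Unset Printing Implicit Defensive.

(* In base b, b^(s+n) - x is the string of digits of b^n - x preceded by s
   digits b - 1, so T maps it to s * (b-1)^e + T (b^n - x); moreover
   (b^(s+n) - x) + x = b^(s+n) has digit sum 1.  It thus suffices to make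
   s * (b-1)^e + T (b^n - x) happy for arbitrarily large s, i.e. to find
   arbitrarily large happy numbers in a given residue class modulo (b-1)^e.
   Appending zeros preserves happiness, and appending a multiple of
   totient((b-1)^e) zeros preserves the residue by Euler's theorem. *)

Section DigitPowerSum.

Variables e b : nat.
Hypotheses (e_gt0 : 0 < e) (b_gt1 : 1 < b).

Let b_gt0 : 0 < b := ltnW b_gt1.

Lemma digit_pow_sum_fuel_eq k k' n : n < k -> n < k' ->
  digit_pow_sum_fuel k e b n = digit_pow_sum_fuel k' e b n.
Proof.
elim: k k' n => [//|k IHk] [//|k'] n n_lt_k n_lt_k' /=.
case: posnP => // n_gt0; have n_b_lt := ltn_Pdiv b_gt1 n_gt0.
by rewrite (IHk k') // (leq_trans n_b_lt).
Qed.

Lemma TE n : T e b n = if n == 0 then 0 else (n %% b) ^ e + T e b (n %/ b).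
Proof.
rewrite {1}/T /=; case: posnP => // n_gt0.
by rewrite (@digit_pow_sum_fuel_eq _ (n %/ b).+1) // ltn_Pdiv.
Qed.

Lemma T0 : T e b 0 = 0.
Proof. by rewrite TE. Qed.

Lemma T_digit n d : d < b -> T e b (n * b + d) = d ^ e + T e b n.
Proof.
move=> d_lt_b; rewrite TE modnMDl modn_small // divnMDl // divn_small // addn0.
case: eqP => // /eqP; rewrite addn_eq0 muln_eq0 (gtn_eqF b_gt0) orbF.
by case/andP=> /eqP-> /eqP->; rewrite T0 exp0n.
Qed.

Lemma T_cat A B K : B < b ^ K -> T e b (A * b ^ K + B) = T e b A + T e b B.
Proof.
elim: K A B => [|K IHK] A B.
  by rewrite expn0 ltnS leqn0 => /eqP ->; rewrite T0 !addn0 muln1.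
move=> B_lt; have B_lt_b := ltn_pmod B b_gt0.
have -> : A * b ^ K.+1 + B = (A * b ^ K + B %/ b) * b + B %% b.
  by rewrite mulnDl -mulnA -expnSr -addnA -divn_eq.
rewrite T_digit // IHK; last by rewrite ltn_divLR // -expnSr.
by rewrite [in RHS](divn_eq B b) T_digit // addnCA.
Qed.

Lemma T_mulXn A K : T e b (A * b ^ K) = T e b A.
Proof. by rewrite -[_ * _]addn0 T_cat ?expn_gt0 ?b_gt0 // T0 addn0. Qed.

Lemma T1 : T e b 1 = 1.
Proof. by rewrite -[1]/(0 * b + 1) T_digit // exp1n T0. Qed.

Lemma T_expn K : T e b (b ^ K) = 1.
Proof. by rewrite -[b ^ K]mul1n T_mulXn T1. Qed.

Lemma T_expnB1 s : T e b (b ^ s - 1) = s * (b - 1) ^ e.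
Proof.
elim: s => [|s IHs]; first by rewrite subnn T0.
have b_s_gt0 : 0 < b ^ s by rewrite expn_gt0 b_gt0.
have -> : b ^ s.+1 - 1 = (b ^ s - 1) * b + (b - 1) by rewrite expnS; nia.
by rewrite T_digit ?IHs ?mulSn // subn1 prednK.
Qed.

Lemma T_expnDB s n x : 0 < x <= b ^ n ->
  T e b (b ^ (s + n) - x) = s * (b - 1) ^ e + T e b (b ^ n - x).
Proof.
case/andP=> x_gt0 x_le; have b_s_gt0 : 0 < b ^ s by rewrite expn_gt0 b_gt0.
have -> : b ^ (s + n) - x = (b ^ s - 1) * b ^ n + (b ^ n - x).
  rewrite expnD; nia.
by rewrite T_cat ?T_expnB1 // ltn_subrL x_gt0 expn_gt0 b_gt0.
Qed.

Lemma happy_T n : 0 < n -> happy e b (T e b n) -> happy e b n.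
Proof. by move=> n_gt0 [_ [r Tr]]; split=> //; exists r.+1; rewrite iterSr. Qed.

Lemma happy_mulXn h K : happy e b h -> happy e b (h * b ^ K).
Proof.
move=> [h_gt0 [r hr]]; split; first by rewrite muln_gt0 h_gt0 expn_gt0 b_gt0.
by exists r.+1; rewrite iterSr T_mulXn -iterSr iterS hr T1.
Qed.

Lemma happy_expn K : happy e b (b ^ K).
Proof. by rewrite -[b ^ K]mul1n; apply: happy_mulXn; split=> //; exists 0. Qed.

Lemma happy_in_progression M c h B : coprime b M -> happy e b h ->
  h = c %[mod M] -> exists2 s, B <= s & happy e b (c + s * M).
Proof.
move=> cop happy_h h_c.
have M_gt0 : 0 < M.
  by case: posnP cop => // ->; rewrite /coprime gcdn0 (gtn_eqF b_gt1).
set n := totient M * (c + B * M); set H := h * b ^ n.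
have H_c : H = c %[mod M].
  rewrite /H expnM -modnMmr -modnXm Euler_exp_totient // modnXm exp1n modnMmr.
  by rewrite muln1.
have H_ge : c + B * M <= H.
  have h_gt0 : 0 < h by case: happy_h.
  have n_ge : c + B * M <= n by rewrite leq_pmull // totient_gt0.
  by rewrite (leq_trans n_ge) // ltnW // (leq_trans (ltn_expl n b_gt1)) // leq_pmull.
have c_le_H := leq_trans (leq_addr _ _) H_ge.
move/eqP: H_c; rewrite eqn_mod_dvd // => /dvdnP [s H_sub_c].
exists s; first by move: H_ge; rewrite -(subnKC c_le_H) H_sub_c leq_add2l leq_pmul2r.
by rewrite -H_sub_c subnKC //; apply: happy_mulXn.
Qed.

End DigitPowerSum.

Theorem lemma2p3 (e b : nat) :
  1 <= e -> 2 <= b -> ~~ odd b ->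
  (forall a : int, exists h : nat,
      happy e b h /\ (h%:Z = a %[mod ((b - 1) ^ e)%:Z])%Z) ->
  forall (x : nat) (N : int), 0 < x ->
    exists l : nat, (N < l%:Z)%R /\ happy e b l /\ happy e b (l + x).
Proof.
move=> e_gt0 b_gt1 _ happy_mod x N x_gt0.
have cop : coprime b ((b - 1) ^ e) by rewrite coprime_pexpr // subn1 coprimenP // ltnW.
have [h [happy_h]] := happy_mod (T e b (b ^ x - x)).
rewrite !modz_nat => -[h_mod].
have [s s_ge happy_s] := happy_in_progression e_gt0 b_gt1 (absz N) cop happy_h h_mod.
have sx_lt := ltn_expl (s + x) b_gt1.
exists (b ^ (s + x) - x); split; first lia.
split.
  apply: happy_T; first lia.
  by rewrite T_expnDB ?x_gt0 ?(ltnW (ltn_expl x b_gt1)) // addnC.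
by rewrite subnK; [apply: happy_expn | lia].
Qed.
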